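(* Let $p\ge2$. The probabilistic frame potential $PFP(\mu)=\iint\langle x,y\rangle^2\,d\mu(x)\,d\mu(y)$ is strongly differentiable at every $\mu\in P_p(\mathbb{R}^d)$, with gradient plan $(\iota,4S_\mu)_\#\mu$.
   Context: $P_p(\mathbb{R}^d)$ is the set of Borel probability measures on $\mathbb{R}^d$ with finite $p$-th moment; $S_\mu=\int yy^\top d\mu(y)$ is the frame operator, viewed as the linear map $x\mapsto S_\mu x$; $\iota$ is the identity map and $(\iota,g)_\#\mu$ the pushforward of $\mu$ under $x\mapsto(x,g(x))$. Let $q=p/(p-1)$. For $\gamma\in P(\mathbb{R}^d\times\mathbb{R}^d)$ and $\nu\in P_p(\mathbb{R}^d)$, $\Gamma(\gamma,\nu)$ denotes the set of probability measures $\beta$ on $(\mathbb{R}^d)^3$ with $(\pi^1,\pi^2)_\#\beta=\gamma$ and $\pi^3_\#\beta=\nu$, and for $\mu=\pi^1_\#\gamma$, $C_{p,\beta}(\mu,\nu)=\big(\iiint\|x_1-x_3\|^p\,d\beta\big)^{1/p}$. A functional $F:P_p(\mathbb{R}^d)\to\mathbb{R}$ is strongly differentiable at $\mu$ with gradient plan $\gamma$ (where $\pi^1_\#\gamma=\mu$ and $\iint\|x_2\|^q d\gamma<\infty$) if for every $\nu\in P_p(\mathbb{R}^d)$ and every $\beta\in\Gamma(\gamma,\nu)$, $F(\nu)-F(\mu)=\iiint\langle x_2,x_3-x_1\rangle\,d\beta(x_1,x_2,x_3)+R_\beta$, where $|R_\beta|\le\omega(C_{p,\beta}(\mu,\nu))$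 for a function $\omega$ depending only on $\mu$ with $\omega(r)/r\to0$ as $r\to0$. *)

(* R^d is modelled as [d.-tuple R], whose measurable
   structure (generated by the coordinate projections) is the Borel
   sigma-algebra of R^d. *)
From HB Require Import structures.
From mathcomp Require Import all_boot all_order all_algebra.
From mathcomp Require Import all_classical all_reals all_analysis.
Set Implicit Arguments. Unset Strict Implicit. Unset Printing Implicit Defensive.
Import Order.TTheory GRing.Theory Num.Theory.
Import numFieldNormedType.Exports.
Local Open Scope classical_set_scope.
Local Open Scope ring_scope.

Section defs.
Context {R : realType} {d : nat}.
Notation V := (d.-tuple R).

Definition dotv (x y : V) : R := \sum_(i < d) tnth x i * tnth y i.
Definition normv (x : V) : R := Num.sqrt (dotv x x).
Definition subv (x y : V) : V := [tuple tnth x i - tnth y i | i < d].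
Definition scalev (a : R) (x : V) : V := [tuple a * tnth x i | i < d].

Definition finite_moment (p : R) (mu : probability V R) : Prop :=
  (\int[mu]_x ((normv x) `^ p)%:E < +oo)%E.

Definition frame_op (mu : probability V R) (x : V) : V :=
  [tuple Rintegral mu setT (fun y => tnth y i * dotv y x) | i < d].

Definition PFP (mu : probability V R) : R :=
  Rintegral mu setT (fun x => Rintegral mu setT (fun y => (dotv x y) ^+ 2)).

Definition Cpb (p : R) (beta : probability ((V * V) * V)%type R) : R :=
  (fine (\int[beta]_z ((normv (subv z.1.1 z.2)) `^ p)%:E)) `^ (p^-1).

Definition in_Gamma (gamma : probability (V * V)%type R) (nu : probability V R)
  (beta : probability ((V * V) * V)%type R) : Prop :=
  (forall A, measurable A -> beta (fst @^-1` A) = gamma A) /\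
  (forall B, measurable B -> beta (snd @^-1` B) = nu B).

(* F strongly differentiable at mu with gradient plan gamma
   (F is given on all probability measures but only evaluated on P_p) *)
Definition strongly_differentiable (p : R) (F : probability V R -> R)
  (mu : probability V R) (gamma : probability (V * V)%type R) : Prop :=
  let q := p / (p - 1) in
  (forall A, measurable A -> gamma (fst @^-1` A) = mu A) /\
  (\int[gamma]_z ((normv z.2) `^ q)%:E < +oo)%E /\
  exists omega : R -> R,
    (fun r => omega r / r) @ 0^'+ --> 0 /\
    forall (nu : probability V R), finite_moment p nu ->
    forall beta, in_Gamma gamma nu beta ->
      `| F nu - F mu
         - Rintegral beta setT (fun z => dotv z.1.2 (subv z.2 z.1.1)) |
        <= omega (Cpb p beta).

End defs.

From HB Require Import structures.
From mathcomp Require Import all_boot all_order all_algebra.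
From mathcomp Require Import all_classical all_reals all_analysis.
From mathcomp Require Import measurable_realfun ring lra.
Import Order.TTheory GRing.Theory Num.Theory.
Import numFieldNormedType.Exports.
Local Open Scope classical_set_scope.
Local Open Scope ring_scope.
Set Implicit Arguments. Unset Strict Implicit. Unset Printing Implicit Defensive.

(* Write PFP nu = \sum_(i,j) N_ij^2 with N the second-moment matrix of nu.  Given
   a coupling beta of the plan (x, 4 S_mu x)_# mu with nu, set u = x3 - x1; then
   N = M + A + A^T + D, where M is the moment matrix of mu,
   A_ij = \int x1_j u_i dbeta and D_ij = \int u_i u_j dbeta.  The part linear in
   A is exactly the gradient pairing \int <4 S_mu x1, u> dbeta, and what is left,
   \sum_(i,j) 2 M_ij D_ij + (A_ij + A_ji + D_ij)^2, is O(C^2) for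
   C = C_{p,beta}(mu,nu): |D_ij| <= \int |u|^2 <= 2 C^2 by bounding |u|^2 by
   C^2 + C^(2-p) |u|^p (here p >= 2 is used), and
   |A_ij| <= C (\int |x|^2 dmu + 2) / 2 by AM-GM with weight C. *)

Section real_integrable.
Context (R : realType) dT (T : measurableType dT) (P : {measure set T -> \bar R}).
Implicit Types f g : T -> R.

Definition Rintegrable f := P.-integrable setT (EFin \o f).

Lemma Rintegrable_sum I (s : seq I) (h : I -> T -> R) :
  (forall i, Rintegrable (h i)) -> Rintegrable (fun x => \sum_(i <- s) h i x).
Proof.
move=> hi; rewrite /Rintegrable.
have -> : EFin \o (fun x => \sum_(i <- s) h i x) = (fun x => (\sum_(i <- s) (h i x)%:E)%E).
  by apply: funext => x /=; rewrite sumEFin.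
by apply: (integrable_sum measurableT) => i _; exact: hi.
Qed.

Lemma RintegrableD f g : Rintegrable f -> Rintegrable g -> Rintegrable (fun x => f x + g x).
Proof. exact: integrableD. Qed.

Lemma RintegrableZ (k : R) f : Rintegrable f -> Rintegrable (fun x => k * f x).
Proof.
move=> hf; have := integrableZl measurableT k hf.
by apply: (eq_integrable measurableT) => x _ /=; rewrite EFinM.
Qed.

Lemma Rintegral_sum I (s : seq I) (h : I -> T -> R) :
  (forall i, Rintegrable (h i)) ->
  Rintegral P setT (fun x => \sum_(i <- s) h i x) = \sum_(i <- s) Rintegral P setT (h i).
Proof.
move=> hi; elim: s => [|a s ih].
  rewrite big_nil; under eq_Rintegral do rewrite big_nil.
  by rewrite (Rintegral_cst _ measurableT) mul0r.
rewrite big_cons; under eq_Rintegral do rewrite big_cons.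
by rewrite RintegralD // ?ih //; [exact: hi | exact: Rintegrable_sum].
Qed.

Lemma le_Rintegrable f g : measurable_fun setT f -> (forall x, `|f x| <= g x) ->
  Rintegrable g -> Rintegrable f.
Proof.
move=> mf fg hg; apply: (le_integrable measurableT (g := EFin \o g)) => //.
  exact/measurable_EFinP.
by move=> x _ /=; rewrite lee_fin (le_trans (fg x)) // ler_norm.
Qed.

Lemma normr_Rintegral_le f g : Rintegrable f -> Rintegrable g ->
  (forall x, `|f x| <= g x) -> `|Rintegral P setT f| <= Rintegral P setT g.
Proof.
move=> hf hg fg; apply: (le_trans (le_normr_Rintegral measurableT hf)).
by apply: le_Rintegral => //; exact: integrable_norm.
Qed.

Definition square_integrable f := measurable_fun setT f /\ Rintegrable (fun x => f x ^+ 2).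

Lemma normrM_le_sqr (a b : R) : `|a * b| <= (a ^+ 2 + b ^+ 2) / 2.
Proof.
rewrite normrM -[a ^+ 2]real_normK ?num_real // -[b ^+ 2]real_normK ?num_real //.
have := sqr_ge0 (`|a| - `|b|); lra.
Qed.

Lemma square_integrableM f g : square_integrable f -> square_integrable g ->
  Rintegrable (fun x => f x * g x).
Proof.
move=> [mf hf] [mg hg]; apply: (le_Rintegrable (g := fun x => f x ^+ 2 + g x ^+ 2)).
- exact: measurable_funM.
- move=> x; apply: (le_trans (normrM_le_sqr _ _)).
  by have := sqr_ge0 (f x); have := sqr_ge0 (g x); lra.
- exact: RintegrableD.
Qed.

Lemma square_integrableD f g : square_integrable f -> square_integrable g ->
  square_integrable (fun x => f x + g x).
Proof.
move=> hf hg; split; first exact: measurable_funD hf.1 hg.1.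
under eq_fun do rewrite sqrrD mulr2n.
apply: RintegrableD; last exact: hg.2.
by apply: RintegrableD; [exact: hf.2 | apply: RintegrableD; exact: square_integrableM].
Qed.

Lemma square_integrableZ (k : R) f :
  square_integrable f -> square_integrable (fun x => k * f x).
Proof.
move=> [mf hf]; split; first exact: measurable_funM.
by under eq_fun do rewrite exprMn; exact: RintegrableZ.
Qed.

Lemma square_integrableB f g : square_integrable f -> square_integrable g ->
  square_integrable (fun x => f x - g x).
Proof.
move=> hf hg; have -> : (fun x => f x - g x) = (fun x => f x + (-1) * g x).
  by apply: funext => x; rewrite mulN1r.
exact: square_integrableD hf (square_integrableZ (-1) hg).
Qed.

Lemma le_square_integrable f g : measurable_fun setT f -> (forall x, f x ^+ 2 <= g x) ->
  Rintegrable g -> square_integrable f.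
Proof.
move=> mf fg hg; split => //; apply: (le_Rintegrable (g := g)) => //.
  exact: measurable_funX.
by move=> x; rewrite ger0_norm ?sqr_ge0.
Qed.

End real_integrable.

Section transfer.
Context (R : realType) dX dY (X : measurableType dX) (Y : measurableType dY)
  (P : probability X R) (Q : probability Y R) (phi : X -> Y).
Hypotheses (mphi : measurable_fun setT phi)
  (pushPQ : forall A, measurable A -> P (phi @^-1` A) = Q A).

Lemma ge0_integral_transfer (f : Y -> \bar R) : measurable_fun setT f ->
  (forall y, 0 <= f y)%E -> (\int[P]_x f (phi x) = \int[Q]_y f y)%E.
Proof.
move=> mf f0; rewrite -(@eq_measure_integral _ _ _ _ _ (pushforward P phi)).
  by rewrite ge0_integral_pushforward.
by move=> A mA _; exact: pushPQ.
Qed.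

Lemma Rintegral_transfer (f : Y -> R) : measurable_fun setT f -> Rintegrable Q f ->
  Rintegrable P (f \o phi) /\ Rintegral P setT (f \o phi) = Rintegral Q setT f.
Proof.
move=> mf /integrableP[_ fi].
have ifphi : Rintegrable P (f \o phi).
  apply/integrableP; split; first exact/measurable_EFinP/measurableT_comp.
  rewrite (ge0_integral_transfer (f := fun y => `|(f y)%:E|%E)) //.
  exact/measurableT_comp/measurable_EFinP.
split => //; rewrite /Rintegral; congr fine.
rewrite -(@eq_measure_integral _ _ _ _ _ (pushforward P phi)); last first.
  by move=> A mA _; exact: pushPQ.
by rewrite integral_pushforward //= ?preimage_setT //; exact/measurable_EFinP.
Qed.

End transfer.

Section real_inequalities.
Context (R : realType).
Implicit Types a b c n l p q : R.

Lemma powR2 n : 0 <= n -> n `^ 2 = n ^+ 2.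
Proof. by move=> n0; rewrite -powR_mulrn. Qed.

Lemma sqr_le1DpowR n p : 0 <= n -> 2 <= p -> n ^+ 2 <= 1 + n `^ p.
Proof.
move=> n0 hp; have [n1|n1] := leP n 1.
  have : n ^+ 2 <= 1 by rewrite expr_le1.
  by have := powR_ge0 n p; lra.
rewrite -powR2 //; apply: (le_trans _ (_ : n `^ p <= 1 + n `^ p)); last lra.
by apply: ler_powR => //; lra.
Qed.

Lemma powR_le1Dsqr n q : 0 <= n -> 0 <= q -> q <= 2 -> n `^ q <= 1 + n ^+ 2.
Proof.
move=> n0 q0 q2; have [n1|n1] := leP n 1.
  have : n `^ q <= 1 `^ q by apply: ge0_ler_powR; rewrite ?nnegrE.
  by rewrite powR1; have := sqr_ge0 n; lra.
apply: (le_trans _ (_ : n ^+ 2 <= 1 + n ^+ 2)); last lra.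
by rewrite -powR2 //; apply: ler_powR => //; lra.
Qed.

(* For n <= l bound n^2 by l^2, otherwise by (n/l)^(p-2) n^2. *)
Lemma sqr_le_sqrDpowR n l p : 0 <= n -> 0 < l -> 2 <= p ->
  n ^+ 2 <= l ^+ 2 + l `^ (2 - p) * n `^ p.
Proof.
move=> n0 l0 hp; have lpn0 := mulr_ge0 (powR_ge0 l (2 - p)) (powR_ge0 n p).
have [nl|nl] := leP n l.
  have : n ^+ 2 <= l ^+ 2 by rewrite ler_sqr // nnegrE; lra.
  lra.
have -> : n `^ p = n `^ (p - 2) * n ^+ 2.
  rewrite -powR2 // -powRD; last by rewrite gt_eqF ?implybT //; lra.
  by congr (_ `^ _); lra.
have ln1 : 1 <= l `^ (2 - p) * n `^ (p - 2).
  have lnp : l `^ (p - 2) <= n `^ (p - 2) by apply: ge0_ler_powR; rewrite ?nnegrE; lra.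
  have e : l `^ (2 - p) * l `^ (p - 2) = 1.
    rewrite -powRD; last by rewrite (gt_eqF l0) implybT.
    by rewrite (_ : 2 - p + (p - 2) = 0) ?powRr0 //; lra.
  by rewrite -[X in X <= _]e ler_wpM2l ?powR_ge0.
rewrite mulrA; have := ler_wpM2r (sqr_ge0 n) ln1; rewrite mul1r.
have := sqr_ge0 l; lra.
Qed.

Lemma powR_le_sumpowR a b c p : 0 <= a -> 0 <= b -> 0 <= c -> 0 <= p ->
  c ^+ 2 <= 2 * a ^+ 2 + 2 * b ^+ 2 -> c `^ p <= 2 `^ p * (a `^ p + b `^ p).
Proof.
move=> a0 b0 c0 p0 hc; have m0 : 0 <= Num.max a b by rewrite le_max a0.
have cm : c <= 2 * Num.max a b.
  rewrite -ler_sqr ?nnegrE ?mulr_ge0 //; apply: (le_trans hc); rewrite exprMn.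
  have : a ^+ 2 <= Num.max a b ^+ 2 by rewrite ler_sqr ?nnegrE // le_max lexx.
  have : b ^+ 2 <= Num.max a b ^+ 2 by rewrite ler_sqr ?nnegrE // le_max lexx orbT.
  lra.
apply: (le_trans (ge0_ler_powR p0 _ _ cm)); rewrite ?nnegrE ?mulr_ge0 //.
rewrite powRM // ler_pM2l ?powR_gt0 //.
by have := powR_ge0 a p; have := powR_ge0 b p; case: (leP a b) => _; lra.
Qed.

Lemma normrM_le_weighted_sqr a b l : 0 < l -> `|a * b| <= (l * a ^+ 2 + b ^+ 2 / l) / 2.
Proof.
move=> l0.
rewrite normrM -[a ^+ 2]real_normK ?num_real // -[b ^+ 2]real_normK ?num_real //.
have -> : (l * `|a| ^+ 2 + `|b| ^+ 2 / l) / 2 =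
    `|a| * `|b| + (l * `|a| - `|b|) ^+ 2 / (2 * l) by field; rewrite gt_eqF.
by rewrite lerDl divr_ge0 ?sqr_ge0 // mulr_ge0 // ltW.
Qed.

Lemma le0_small_multiples a b : 0 <= b ->
  (forall l, 0 < l -> l <= 1 -> a <= l * b) -> a <= 0.
Proof.
move=> b0 h; rewrite leNgt; apply/negP => a0.
have b1 : 0 < 2 * (b + 1) by apply: mulr_gt0 => //; lra.
pose l := Num.min 1 (a / (2 * (b + 1))).
have l0 : 0 < l by rewrite lt_min ltr01 divr_gt0.
have la : l * b <= a / (2 * (b + 1)) * b by apply: ler_wpM2r; rewrite // ge_min lexx orbT.
have : a / (2 * (b + 1)) * b < a by rewrite mulrAC ltr_pdivrMr // ltr_pM2l //; lra.
have l1 : l <= 1 by rewrite ge_min lexx.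
have := h l l0 l1; lra.
Qed.

End real_inequalities.

Section euclidean.
Context (R : realType) (d : nat).
Notation V := (d.-tuple R).
Implicit Types x y : V.

Lemma dotv_ge0 x : 0 <= dotv x x.
Proof. by apply: sumr_ge0 => i _; rewrite -expr2 sqr_ge0. Qed.

Lemma normv_ge0 x : 0 <= normv x.
Proof. exact: sqrtr_ge0. Qed.

Lemma normvK x : normv x ^+ 2 = dotv x x.
Proof. by rewrite sqr_sqrtr // dotv_ge0. Qed.

Lemma sqr_tnth_le_dotv x i : tnth x i ^+ 2 <= dotv x x.
Proof.
rewrite /dotv (bigD1 i) //= -expr2 lerDl.
by apply: sumr_ge0 => j _; rewrite -expr2 sqr_ge0.
Qed.

Lemma normr_tnth_le_normv x i : `|tnth x i| <= normv x.
Proof. by rewrite -sqrtr_sqr ler_sqrt ?dotv_ge0 // sqr_tnth_le_dotv. Qed.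

Lemma tnth_subv x y i : tnth (subv x y) i = tnth x i - tnth y i.
Proof. by rewrite tnth_mktuple. Qed.

Lemma tnth_scalev a x i : tnth (scalev a x) i = a * tnth x i.
Proof. by rewrite tnth_mktuple. Qed.

Lemma dotv_subvE x y : dotv (subv x y) (subv x y) = \sum_(i < d) (tnth x i - tnth y i) ^+ 2.
Proof. by apply: eq_bigr => i _; rewrite tnth_subv expr2. Qed.

Lemma normv_subvC x y : normv (subv x y) = normv (subv y x).
Proof.
rewrite /normv !dotv_subvE; congr Num.sqrt.
by apply: eq_bigr => i _; rewrite -sqrrN opprB.
Qed.

Lemma dotv_subv_le x y : dotv (subv x y) (subv x y) <= 2 * dotv x x + 2 * dotv y y.
Proof.
rewrite dotv_subvE /dotv !mulr_sumr -big_split /=; apply: ler_sum => i _.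
by have := sqr_ge0 (tnth x i + tnth y i); lra.
Qed.

Section measurability.
Context dT (T : measurableType dT).
Implicit Types f g : T -> V.

Lemma measurable_fun_tnth f i : measurable_fun setT f ->
  measurable_fun setT (fun t => tnth (f t) i).
Proof. exact: measurableT_comp (measurable_tnth i). Qed.

Lemma measurable_dotv f g : measurable_fun setT f -> measurable_fun setT g ->
  measurable_fun setT (fun t => dotv (f t) (g t)).
Proof.
move=> mf mg; apply: measurable_sum => i.
by apply: measurable_funM; exact: measurable_fun_tnth.
Qed.

Lemma measurable_powR_normv f r : measurable_fun setT f ->
  measurable_fun setT (fun t => normv (f t) `^ r).
Proof.
move=> mf; apply: measurableT_comp (measurable_powR r) _.
apply: measurableT_comp (measurable_dotv mf mf).
apply: continuous_measurable_fun; exact: sqrt_continuous.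
Qed.

Lemma measurable_subv f g : measurable_fun setT f -> measurable_fun setT g ->
  measurable_fun setT (fun t => subv (f t) (g t)).
Proof.
move=> mf mg; apply/measurable_fun_tnthP => i; rewrite /comp.
under eq_fun do rewrite tnth_subv.
by apply: measurable_funB; exact: measurable_fun_tnth.
Qed.

End measurability.

End euclidean.

Lemma sum_symmetrize (R : numDomainType) n (F G : 'I_n -> 'I_n -> R) :
  (forall i j, F i j = F j i) ->
  \sum_(i < n) \sum_(j < n) F i j * (G i j + G j i) =
  2 * \sum_(i < n) \sum_(j < n) F i j * G i j.
Proof.
move=> FC; transitivity (\sum_(i < n) \sum_(j < n) F i j * G i j +
                        \sum_(i < n) \sum_(j < n) F i j * G j i).
  rewrite -big_split; apply: eq_bigr => i _.
  by rewrite -big_split; apply: eq_bigr => j _; rewrite mulrDr.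
rewrite [X in _ + X]exchange_big /= mulr_natl mulr2n.
congr (_ + _); apply: eq_bigr => i _; apply: eq_bigr => j _; by rewrite FC.
Qed.

Section moment_matrix.
Context (R : realType) (d : nat).
Notation V := (d.-tuple R).

Definition moment_matrix (nu : probability V R) (i j : 'I_d) : R :=
  Rintegral nu setT (fun y => tnth y i * tnth y j).

Lemma moment_matrixC (nu : probability V R) i j : moment_matrix nu i j = moment_matrix nu j i.
Proof. by apply: eq_Rintegral => y _; rewrite mulrC. Qed.

Lemma sqr_dotvE (x y : V) : dotv x y ^+ 2 =
  \sum_(i < d) \sum_(j < d) (tnth x i * tnth x j) * (tnth y i * tnth y j).
Proof.
rewrite expr2 /dotv big_distrlr /=; apply: eq_bigr => i _; apply: eq_bigr => j _.
by rewrite mulrACA.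
Qed.

Context (p : R) (hp : 2 <= p) (nu : probability V R) (hnu : finite_moment p nu).

Lemma finite_moment_integrable_powR : Rintegrable nu (fun x => normv x `^ p).
Proof.
apply/integrableP; split; first exact/measurable_EFinP/measurable_powR_normv.
apply: le_lt_trans hnu; rewrite le_eqVlt; apply/orP; left; apply/eqP.
by apply: eq_integral => x _ /=; rewrite ger0_norm // powR_ge0.
Qed.

Lemma finite_moment_integrable_dotv : Rintegrable nu (fun x => dotv x x).
Proof.
apply: (le_Rintegrable (g := fun x => 1 + normv x `^ p)).
- exact: measurable_dotv.
- by move=> x; rewrite ger0_norm ?dotv_ge0 // -normvK sqr_le1DpowR ?normv_ge0.
- apply: RintegrableD; last exact: finite_moment_integrable_powR.
  exact: finite_measure_integrable_cst.
Qed.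

Lemma finite_moment_square_integrable_tnth i : square_integrable nu (fun x => tnth x i).
Proof.
apply: (le_square_integrable (g := fun x => dotv x x)).
- exact: measurable_tnth.
- by move=> x; exact: sqr_tnth_le_dotv.
- exact: finite_moment_integrable_dotv.
Qed.

Lemma finite_moment_integrable_tnthM i j : Rintegrable nu (fun x => tnth x i * tnth x j).
Proof. by apply: square_integrableM; exact: finite_moment_square_integrable_tnth. Qed.

Lemma PFP_moment_matrix : PFP nu = \sum_(i < d) \sum_(j < d) moment_matrix nu i j ^+ 2.
Proof.
have iM := finite_moment_integrable_tnthM.
have inner x : Rintegral nu setT (fun y => dotv x y ^+ 2) =
    \sum_(i < d) \sum_(j < d) moment_matrix nu i j * (tnth x i * tnth x j).
  under eq_Rintegral do rewrite sqr_dotvE.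
  rewrite Rintegral_sum => [|i]; last by apply: Rintegrable_sum => j; exact: RintegrableZ.
  apply: eq_bigr => i _; rewrite Rintegral_sum => [|j]; last exact: RintegrableZ.
  apply: eq_bigr => j _; rewrite RintegralZl //; last exact: iM.
  by rewrite mulrC.
rewrite /PFP; under eq_Rintegral do rewrite inner.
rewrite Rintegral_sum => [|i]; last by apply: Rintegrable_sum => j; exact: RintegrableZ.
apply: eq_bigr => i _; rewrite Rintegral_sum => [|j]; last exact: RintegrableZ.
by apply: eq_bigr => j _; rewrite RintegralZl //; exact: iM.
Qed.

Lemma tnth_frame_op x i :
  tnth (frame_op nu x) i = \sum_(j < d) moment_matrix nu i j * tnth x j.
Proof.
have iM := finite_moment_integrable_tnthM.
rewrite tnth_mktuple; under eq_Rintegral do rewrite /dotv mulr_sumr.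
rewrite Rintegral_sum => [|j]; last first.
  under eq_fun do rewrite mulrA mulrC; exact: RintegrableZ.
apply: eq_bigr => j _; rewrite -RintegralZr //; last exact: iM.
by apply: eq_Rintegral => y _; rewrite mulrA.
Qed.

End moment_matrix.

Section frame_potential_gradient.
Context (R : realType) (d : nat) (p : R) (hp : 2 <= p).
Notation V := (d.-tuple R).
Context (mu : probability V R) (hmu : finite_moment p mu)
  (gamma : probability (V * V)%type R)
  (hgamma : forall A, measurable A ->
     gamma A = mu ((fun x => (x, scalev 4 (frame_op mu x))) @^-1` A)).

Let M := moment_matrix mu.
Let grad (x : V) := scalev 4 (frame_op mu x).
Let m2 := Rintegral mu setT (fun y : V => dotv y y).

Lemma m2_ge0 : 0 <= m2.
Proof. by apply: Rintegral_ge0 => y _; exact: dotv_ge0. Qed.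

Lemma normr_moment_matrix_le i j : `|M i j| <= m2.
Proof.
apply: normr_Rintegral_le.
- exact: finite_moment_integrable_tnthM hmu i j.
- exact: finite_moment_integrable_dotv hmu.
- move=> y; apply: (le_trans (normrM_le_sqr _ _)).
  by have := sqr_tnth_le_dotv y i; have := sqr_tnth_le_dotv y j; lra.
Qed.

Lemma tnth_grad x i : tnth (grad x) i = 4 * \sum_(j < d) M i j * tnth x j.
Proof. by rewrite tnth_scalev (tnth_frame_op hp hmu). Qed.

Lemma measurable_grad : measurable_fun setT grad.
Proof.
apply/measurable_fun_tnthP => i; rewrite /comp.
under eq_fun do rewrite tnth_grad.
apply: measurable_funM => //; apply: measurable_sum => j.
exact: measurable_funM (measurable_tnth j).
Qed.

Lemma gamma_marginal A : measurable A -> gamma (fst @^-1` A) = mu A.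
Proof.
move=> mA; rewrite hgamma; first by [].
by rewrite -[X in measurable X]setTI; exact: measurable_fst.
Qed.

Definition off_graph : set (V * V) := [set w | w.2 <> grad w.1].

(* The graph is the zero set of the measurable map w |-> |w.2 - grad w.1|^2. *)
Lemma measurable_off_graph : measurable off_graph.
Proof.
pose h (w : V * V) := \sum_(i < d) (tnth w.2 i - tnth (grad w.1) i) ^+ 2.
have mh : measurable_fun setT h.
  apply: measurable_sum => i; apply/measurable_funX/measurable_funB.
    exact: measurable_fun_tnth measurable_snd.
  exact: measurable_fun_tnth (measurableT_comp measurable_grad measurable_fst).
have -> : off_graph = h @^-1` (~` [set 0]).
  apply/seteqP; split => w /= hw; last first.
    by move=> e; apply: hw; rewrite /h e; apply: big1 => i _; rewrite subrr expr0n.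
  move=> /eqP; rewrite psumr_eq0 => [/allP h0|i _]; last exact: sqr_ge0.
  apply: hw; apply: eq_from_tnth => i; have := h0 i (mem_index_enum _).
  by rewrite sqrf_eq0 subr_eq0 => /eqP.
by rewrite -[X in measurable X]setTI; exact: mh (measurableC (measurable_set1 _)).
Qed.

Lemma gamma_off_graph : gamma off_graph = 0%E.
Proof.
rewrite hgamma; last exact: measurable_off_graph.
by rewrite [X in mu X](_ : _ = set0) ?measure0 //; apply/seteqP; split => x //= /(_ erefl).
Qed.

Definition remainder_bound (r : R) :=
  d%:R * (d%:R * (4 * m2 * r ^+ 2 + (r * (m2 + 2) + 2 * r ^+ 2) ^+ 2)).

Lemma remainder_bound_littleo : (fun r => remainder_bound r / r) @ 0^'+ --> (0 : R).
Proof.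
pose P : {poly R} := (d%:R * (d%:R * (4 * m2))) *: 'X +
   (d%:R * d%:R) *: ('X * ((m2 + 2)%:P + 2%:P * 'X) ^+ 2).
have hornerPE r : P.[r] =
    (d%:R * (d%:R * (4 * m2))) * r + (d%:R * d%:R) * (r * (m2 + 2 + 2 * r) ^+ 2).
  by rewrite !(hornerD, hornerZ, hornerM, hornerX, hornerC, horner_exp).
have -> : (fun r => remainder_bound r / r) = horner P.
  apply: funext => r; rewrite hornerPE /remainder_bound.
  have [->|r0] := eqVneq r 0; first by rewrite invr0 mulr0; ring.
  by field.
have P0 : P.[0] = 0 by rewrite hornerPE; ring.
by have := cvg_at_right_filter (@continuous_horner R P 0); rewrite P0.
Qed.

Lemma normr_tnth_grad_le x i : `|tnth (grad x) i| <= 4 * (d%:R * (m2 * normv x)).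
Proof.
rewrite tnth_grad normrM ger0_norm // ler_pM2l //.
apply: (le_trans (ler_norm_sum _ _ _)).
apply: (le_trans (_ : _ <= \sum_(j < d) m2 * normv x)).
  by apply: ler_sum => j _; rewrite normrM ler_pM ?normr_moment_matrix_le ?normr_tnth_le_normv.
by rewrite sumr_const card_ord mulr_natl.
Qed.

Lemma dotv_grad_le x : dotv (grad x) (grad x) <= d%:R * (4 * (d%:R * m2)) ^+ 2 * dotv x x.
Proof.
apply: (le_trans (_ : _ <= \sum_(i < d) (4 * (d%:R * (m2 * normv x))) ^+ 2)).
  apply: ler_sum => i _; apply: (le_trans (ler_norm _)).
  by rewrite normrM expr2; apply: ler_pM; rewrite ?normr_tnth_grad_le.
rewrite sumr_const card_ord -mulr_natl -normvK.
by rewrite le_eqVlt; apply/orP; left; apply/eqP; ring.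
Qed.

Lemma grad_q_moment_finite :
  (\int[gamma]_z ((normv z.2) `^ (p / (p - 1)))%:E < +oo)%E.
Proof.
set q := p / (p - 1).
have p1 : 0 < p - 1 by rewrite subr_gt0; apply: lt_le_trans hp; rewrite ltr1n.
have q0 : 0 <= q by apply: divr_ge0; [exact: le_trans hp | exact: ltW].
have q2 : q <= 2 by rewrite /q ler_pdivrMr //; have := hp; lra.
have mgraph : measurable_fun setT (fun x : V => (x, grad x)).
  exact: measurable_fun_pair measurable_grad.
have push A : measurable A -> mu ((fun x => (x, grad x)) @^-1` A) = gamma A.
  by move=> mA; rewrite hgamma.
rewrite -(ge0_integral_transfer mgraph push (f := fun w => (normv w.2 `^ q)%:E)) /=.
- set K := d%:R * (4 * (d%:R * m2)) ^+ 2.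
  have iK : Rintegrable mu (fun x => 1 + K * dotv x x).
    apply: RintegrableD; first exact: finite_measure_integrable_cst.
    by apply: RintegrableZ; exact: (finite_moment_integrable_dotv hp hmu).
  apply: (le_lt_trans (_ : _ <= \int[mu]_x (1 + K * dotv x x)%:E)%E).
    2: exact: integrable_lty iK.
  apply: ge0_le_integral => //.
  + by move=> x _; rewrite lee_fin powR_ge0.
  + by apply/measurable_EFinP; exact: measurable_powR_normv measurable_grad.
  + by move/integrableP: iK => [].
  + move=> x _; rewrite lee_fin (le_trans (powR_le1Dsqr _ q0 q2)) ?normv_ge0 //.
    by rewrite lerD2l normvK dotv_grad_le.
- by apply/measurable_EFinP; exact: measurable_powR_normv measurable_snd.
- by move=> w; rewrite lee_fin powR_ge0.
Qed.


Section coupling.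
Context (nu : probability V R) (hnu : finite_moment p nu)
  (beta : probability ((V * V) * V)%type R) (hbeta : in_Gamma gamma nu beta).

Lemma beta_marginal1 A : measurable A -> beta ((fun z => z.1.1) @^-1` A) = mu A.
Proof.
move=> mA; rewrite -gamma_marginal //; apply: hbeta.1.
by rewrite -[X in measurable X]setTI; exact: measurable_fst.
Qed.

Lemma Rintegral_marginal1 (f : V -> R) : measurable_fun setT f -> Rintegrable mu f ->
  Rintegrable beta (fun z => f z.1.1) /\
  Rintegral beta setT (fun z => f z.1.1) = Rintegral mu setT f.
Proof.
apply: (Rintegral_transfer _ beta_marginal1).
exact: measurableT_comp measurable_fst measurable_fst.
Qed.

Lemma Rintegral_marginal3 (f : V -> R) : measurable_fun setT f -> Rintegrable nu f ->
  Rintegrable beta (fun z => f z.2) /\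
  Rintegral beta setT (fun z => f z.2) = Rintegral nu setT f.
Proof. exact: (Rintegral_transfer measurable_snd hbeta.2). Qed.

Lemma square_integrable_x1 i : square_integrable beta (fun z => tnth z.1.1 i).
Proof.
have [mx ix] := finite_moment_square_integrable_tnth hp hmu i.
split; first exact: measurable_fun_tnth (measurableT_comp measurable_fst measurable_fst).
by have [] := Rintegral_marginal1 (measurable_funX _ mx) ix.
Qed.

Lemma square_integrable_x3 i : square_integrable beta (fun z => tnth z.2 i).
Proof.
have [mx ix] := finite_moment_square_integrable_tnth hp hnu i.
split; first exact: measurable_fun_tnth measurable_snd.
by have [] := Rintegral_marginal3 (measurable_funX _ mx) ix.
Qed.

Definition incr i (z : (V * V) * V) := tnth z.2 i - tnth z.1.1 i.

Lemma square_integrable_incr i : square_integrable beta (incr i).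
Proof. exact: square_integrableB (square_integrable_x3 i) (square_integrable_x1 i). Qed.

Definition cross_moment i j := Rintegral beta setT (fun z => tnth z.1.1 j * incr i z).
Definition incr_moment i j := Rintegral beta setT (fun z => incr i z * incr j z).

Let A := cross_moment.
Let D := incr_moment.

Lemma moment_matrix_coupling i j : moment_matrix nu i j = M i j + A j i + A i j + D i j.
Proof.
have mij : measurable_fun setT (fun y : V => tnth y i * tnth y j).
  by apply: measurable_funM; exact: measurable_tnth.
rewrite /M /moment_matrix.
have [_ <-] := Rintegral_marginal3 mij (finite_moment_integrable_tnthM hp hnu i j).
have [_ <-] := Rintegral_marginal1 mij (finite_moment_integrable_tnthM hp hmu i j).
have i11 := square_integrableM (square_integrable_x1 i) (square_integrable_x1 j).
have i1u := square_integrableM (square_integrable_x1 i) (square_integrable_incr j).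
have i1u' := square_integrableM (square_integrable_x1 j) (square_integrable_incr i).
have iuu := square_integrableM (square_integrable_incr i) (square_integrable_incr j).
have i2 := RintegrableD i11 i1u; have i3 := RintegrableD i2 i1u'.
rewrite /A /D /cross_moment /incr_moment -!RintegralD //.
by apply: eq_Rintegral => z _; rewrite /incr; ring.
Qed.

Lemma gradient_pairingE : Rintegral beta setT (fun z => dotv z.1.2 (subv z.2 z.1.1)) =
  \sum_(i < d) \sum_(j < d) 2 * M i j * (A i j + A j i).
Proof.
have m11 : measurable_fun setT (fun z : (V * V) * V => z.1.1).
  exact: measurableT_comp measurable_fst measurable_fst.
have mu1 := measurable_subv measurable_snd m11.
have iA i j := square_integrableM (square_integrable_x1 j) (square_integrable_incr i).
have -> : Rintegral beta setT (fun z => dotv z.1.2 (subv z.2 z.1.1)) =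
          Rintegral beta setT (fun z => dotv (grad z.1.1) (subv z.2 z.1.1)).
  rewrite /Rintegral; congr fine; apply: ae_eq_integral => //.
  - apply/measurable_EFinP; apply: measurable_dotv mu1.
    exact: measurableT_comp measurable_snd measurable_fst.
  - apply/measurable_EFinP; apply: measurable_dotv mu1.
    exact: measurableT_comp measurable_grad m11.
  - exists (fst @^-1` off_graph); split.
    + by rewrite -[X in measurable X]setTI; exact: measurable_fst measurable_off_graph.
    + exact: etrans (hbeta.1 _ measurable_off_graph) gamma_off_graph.
    + by move=> z /= hz; apply: contra_not hz => -> _.
have pointwise z : dotv (grad z.1.1) (subv z.2 z.1.1) =
    \sum_(i < d) \sum_(j < d) (4 * M i j) * (tnth z.1.1 j * incr i z).
  apply: eq_bigr => i _; rewrite tnth_grad tnth_subv mulr_sumr mulr_suml.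
  by apply: eq_bigr => j _; rewrite /incr; ring.
under eq_Rintegral do rewrite pointwise.
rewrite Rintegral_sum => [|i]; last by apply: Rintegrable_sum => j; exact: RintegrableZ.
have -> : \sum_(i < d) \sum_(j < d) 2 * M i j * (A i j + A j i) =
    \sum_(i < d) \sum_(j < d) 4 * M i j * A i j.
  rewrite (sum_symmetrize (F := fun i j => 2 * M i j)) => [|i j]; last first.
    by rewrite /M moment_matrixC.
  rewrite mulr_sumr; apply: eq_bigr => i _; rewrite mulr_sumr; apply: eq_bigr => j _; ring.
apply: eq_bigr => i _; rewrite Rintegral_sum => [|j]; last exact: RintegrableZ.
by apply: eq_bigr => j _; rewrite RintegralZl //; exact: iA.
Qed.


Let energy := Rintegral beta setT (fun z => dotv (subv z.2 z.1.1) (subv z.2 z.1.1)).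
Let pmoment := Rintegral beta setT (fun z => normv (subv z.2 z.1.1) `^ p).
Let C := Cpb p beta.

Lemma energy_ge0 : 0 <= energy.
Proof. by apply: Rintegral_ge0 => z _; exact: dotv_ge0. Qed.

Lemma pmoment_ge0 : 0 <= pmoment.
Proof. by apply: Rintegral_ge0 => z _; exact: powR_ge0. Qed.

Lemma integrable_energy : Rintegrable beta (fun z => dotv (subv z.2 z.1.1) (subv z.2 z.1.1)).
Proof.
under eq_fun do rewrite dotv_subvE.
by apply: Rintegrable_sum => i; exact: (square_integrable_incr i).2.
Qed.

Lemma integrable_pmoment : Rintegrable beta (fun z => normv (subv z.2 z.1.1) `^ p).
Proof.
have p0 : 0 <= p by exact: le_trans hp.
have mid := @measurable_id _ V setT.
apply: (le_Rintegrable (g := fun z => 2 `^ p * (normv z.1.1 `^ p + normv z.2 `^ p))).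
- apply/measurable_powR_normv/measurable_subv => //.
  exact: measurableT_comp measurable_fst measurable_fst.
- move=> z; rewrite ger0_norm ?powR_ge0 // powR_le_sumpowR ?normv_ge0 //.
  by rewrite !normvK addrC dotv_subv_le.
- apply/RintegrableZ/RintegrableD.
  + have := finite_moment_integrable_powR hmu.
    by move/(Rintegral_marginal1 (measurable_powR_normv p mid)) => [].
  + have := finite_moment_integrable_powR hnu.
    by move/(Rintegral_marginal3 (measurable_powR_normv p mid)) => [].
Qed.

Lemma normr_incr_moment_le i j : `|D i j| <= energy.
Proof.
apply: normr_Rintegral_le integrable_energy _ => [|z].
  exact: square_integrableM (square_integrable_incr i) (square_integrable_incr j).
apply: (le_trans (normrM_le_sqr _ _)).
have := sqr_tnth_le_dotv (subv z.2 z.1.1) i; have := sqr_tnth_le_dotv (subv z.2 z.1.1) j.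
by rewrite !tnth_subv /incr; lra.
Qed.

Lemma normr_cross_moment_le_weighted i j l : 0 < l ->
  `|A i j| <= (l * m2 + energy / l) / 2.
Proof.
move=> l0; have l0' : l != 0 by rewrite gt_eqF.
have mid := @measurable_id _ V setT.
have [ix1 Ex1] := Rintegral_marginal1 (measurable_dotv mid mid)
  (finite_moment_integrable_dotv hp hmu).
pose bound (z : (V * V) * V) :=
  l / 2 * dotv z.1.1 z.1.1 + (2 * l)^-1 * dotv (subv z.2 z.1.1) (subv z.2 z.1.1).
have ibound : Rintegrable beta bound.
  by apply: RintegrableD; apply: RintegrableZ => //; exact: integrable_energy.
have -> : (l * m2 + energy / l) / 2 = Rintegral beta setT bound.
  rewrite RintegralD //; [|exact: RintegrableZ|exact: RintegrableZ integrable_energy].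
  rewrite !RintegralZl //; last exact: integrable_energy.
  by rewrite Ex1 /m2 /energy; field.
apply: normr_Rintegral_le ibound _ => [|z].
  exact: square_integrableM (square_integrable_x1 j) (square_integrable_incr i).
apply: (le_trans (normrM_le_weighted_sqr _ _ l0)).
have := sqr_tnth_le_dotv z.1.1 j; have := sqr_tnth_le_dotv (subv z.2 z.1.1) i.
rewrite tnth_subv /incr => hu hx.
have -> : (l * tnth z.1.1 j ^+ 2 + (tnth z.2 i - tnth z.1.1 i) ^+ 2 / l) / 2 =
  l / 2 * tnth z.1.1 j ^+ 2 + (2 * l)^-1 * (tnth z.2 i - tnth z.1.1 i) ^+ 2 by field.
by apply: lerD; apply: ler_wpM2l => //; rewrite ?invr_ge0 mulr_ge0 // ?invr_ge0 ltW.
Qed.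

Lemma energy_le_interpolate l : 0 < l -> energy <= l ^+ 2 + l `^ (2 - p) * pmoment.
Proof.
move=> l0.
have icst := @finite_measure_integrable_cst _ _ _ beta setT (l ^+ 2) measurableT.
have -> : l ^+ 2 + l `^ (2 - p) * pmoment = Rintegral beta setT
    (fun z => l ^+ 2 + l `^ (2 - p) * normv (subv z.2 z.1.1) `^ p).
  rewrite RintegralD //; last exact: RintegrableZ integrable_pmoment.
  rewrite RintegralZl //; last exact: integrable_pmoment.
  rewrite Rintegral_cst //.
  have -> : fine (beta setT) = 1 by exact: (congr1 fine (probability_setT beta)).
  by rewrite mulr1.
apply: le_Rintegral => //; first exact: integrable_energy.
  exact: RintegrableD icst (RintegrableZ _ integrable_pmoment).
by move=> z _; rewrite -normvK sqr_le_sqrDpowR ?normv_ge0.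
Qed.

Lemma Cpb_pmoment : C = pmoment `^ p^-1.
Proof.
rewrite /C /Cpb /pmoment /Rintegral.
have -> : (\int[beta]_z (normv (subv z.1.1 z.2) `^ p)%:E =
           \int[beta]_z (normv (subv z.2 z.1.1) `^ p)%:E)%E.
  by apply: eq_integral => z _; rewrite normv_subvC.
by [].
Qed.

Lemma Cpb_ge0 : 0 <= C.
Proof. by rewrite Cpb_pmoment powR_ge0. Qed.

Lemma powR_Cpb : C `^ p = pmoment.
Proof.
have p0 : p != 0 by rewrite gt_eqF //; exact: lt_le_trans hp.
by rewrite Cpb_pmoment -powRrM mulVf // powRr1 // pmoment_ge0.
Qed.

(* Interpolate at l = C; when C = 0 the increment vanishes a.e. and every l > 0 works. *)
Lemma energy_le : energy <= 2 * C ^+ 2.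
Proof.
have [C0|C0] := eqVneq C 0.
  have P0 : pmoment = 0 by rewrite -powR_Cpb C0 powR0 // gt_eqF //; exact: lt_le_trans hp.
  rewrite C0 expr0n mulr0; apply: (le0_small_multiples (b := 1)) => // l l0 l1.
  apply: (le_trans (energy_le_interpolate l0)); rewrite P0 mulr0 addr0 mulr1 expr2.
  by rewrite ler_piMr // ltW.
have Cp : 0 < C by rewrite lt_neqAle eq_sym C0 Cpb_ge0.
apply: (le_trans (energy_le_interpolate Cp)); rewrite -powR_Cpb -powRD ?C0 ?implybT //.
by rewrite (_ : 2 - p + p = 2) ?powR2 ?Cpb_ge0 //; lra.
Qed.

Lemma normr_cross_moment_le i j : `|A i j| <= C * (m2 + 2) / 2.
Proof.
have [C0|C0] := eqVneq C 0.
  have E0 : energy = 0.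
    by apply/eqP; rewrite eq_le energy_ge0 andbT; have := energy_le; rewrite C0 expr0n mulr0.
  rewrite C0 !mul0r; apply: (le0_small_multiples (b := m2)) => [|l l0 _]; first exact: m2_ge0.
  apply: (le_trans (normr_cross_moment_le_weighted i j l0)).
  by rewrite E0 mul0r addr0; have := mulr_ge0 (ltW l0) m2_ge0; lra.
have Cp : 0 < C by rewrite lt_neqAle eq_sym C0 Cpb_ge0.
apply: (le_trans (normr_cross_moment_le_weighted i j Cp)).
have : energy / C <= 2 * C by rewrite ler_pdivrMr // -mulrA -expr2 energy_le.
lra.
Qed.

Lemma PFP_remainderE :
  PFP nu - PFP mu - Rintegral beta setT (fun z => dotv z.1.2 (subv z.2 z.1.1)) =
  \sum_(i < d) \sum_(j < d) (2 * M i j * D i j + (A i j + A j i + D i j) ^+ 2).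
Proof.
rewrite (PFP_moment_matrix hp hnu) (PFP_moment_matrix hp hmu) gradient_pairingE.
rewrite -!sumrB; apply: eq_bigr => i _; rewrite -!sumrB; apply: eq_bigr => j _.
by rewrite moment_matrix_coupling /M; ring.
Qed.

Lemma remainder_term_le i j :
  `|2 * M i j * D i j + (A i j + A j i + D i j) ^+ 2| <=
  4 * m2 * C ^+ 2 + (C * (m2 + 2) + 2 * C ^+ 2) ^+ 2.
Proof.
have hM := normr_moment_matrix_le i j; have hD := normr_incr_moment_le i j.
have hA1 := normr_cross_moment_le i j; have hA2 := normr_cross_moment_le j i.
have hE := energy_le; have C0 := Cpb_ge0; have m20 := m2_ge0.
apply: (le_trans (ler_normD _ _)); apply: lerD.
  rewrite -mulrA normrM ger0_norm // normrM.
  have : `|M i j| * `|D i j| <= m2 * (2 * C ^+ 2) by apply: ler_pM => //; exact: le_trans hE.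
  lra.
have hS : `|A i j + A j i + D i j| <= C * (m2 + 2) + 2 * C ^+ 2.
  apply: (le_trans (ler_normD _ _)); apply: lerD; last exact: le_trans hE.
  by apply: (le_trans (ler_normD _ _)); lra.
by rewrite normrX !expr2; apply: ler_pM.
Qed.

Lemma PFP_remainder_le :
  `|PFP nu - PFP mu - Rintegral beta setT (fun z => dotv z.1.2 (subv z.2 z.1.1))|
    <= remainder_bound C.
Proof.
rewrite PFP_remainderE; apply: (le_trans (ler_norm_sum _ _ _)).
apply: (le_trans (_ : _ <= \sum_(i < d) \sum_(j < d)
    (4 * m2 * C ^+ 2 + (C * (m2 + 2) + 2 * C ^+ 2) ^+ 2))).
  apply: ler_sum => i _; apply: (le_trans (ler_norm_sum _ _ _)).
  by apply: ler_sum => j _; exact: remainder_term_le.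
by rewrite !sumr_const !card_ord /remainder_bound !mulr_natl.
Qed.

End coupling.

End frame_potential_gradient.

Unset Implicit Arguments.
Theorem mainTheorem6 (R : realType) (d : nat) (p : R) (hp : 2 <= p)
  (mu : probability (d.-tuple R) R) (hmu : finite_moment p mu)
  (gamma : probability (d.-tuple R * d.-tuple R)%type R)
  (hgamma : forall A, measurable A ->
     gamma A = mu ((fun x => (x, scalev 4 (frame_op mu x))) @^-1` A)) :
  strongly_differentiable p (@PFP R d) mu gamma.
Proof.
split; first exact: (gamma_marginal hgamma).
split; first exact: (grad_q_moment_finite hp hmu hgamma).
exists (remainder_bound mu); split; first exact: remainder_bound_littleo.
move=> nu hnu beta hbeta.
exact: (PFP_remainder_le hp hmu hgamma hnu hbeta).
Qed.
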